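(* Let $n,t\in\mathbb{N}$. Let $F$ be a $2$-regular graph on $n$ vertices all of whose cycles have length at least $30$. Let $n_1,\dots,n_t\in\mathbb{N}$ with $\sum_{i\in[t]}n_i=n$ and $n_i\ge50$ for all $i$. Then there exists $f:V(F)\to[t]$ such that (i) $|f^{-1}(i)|=n_i$ for all $i\in[t]$; (ii) $|f(x)-f(y)|\le1$ for all $xy\in E(F)$; (iii) the set $E$ of edges $xy\in E(F)$ with $f(x)\ne f(y)$ is an induced matching in $F$; (iv) for every $i\in[t-1]$ there are exactly four edges $xy\in E(F)$ with $\{f(x),f(y)\}=\{i,i+1\}$. *)

From HB Require Import structures.
From mathcomp Require Import all_boot all_order.
Set Implicit Arguments. Unset Strict Implicit. Unset Printing Implicit Defensive.

Definition simple_graph (T : finType) (e : rel T) : Prop :=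
  symmetric e /\ irreflexive e.

Definition two_regular (T : finType) (e : rel T) : Prop :=
  forall x : T, #|[set y | e x y]| = 2.

Definition cycles_at_least (T : finType) (k : nat) (e : rel T) : Prop :=
  forall c : seq T, uniq c -> cycle e c -> 3 <= size c -> k <= size c.

Definition edges (T : finType) (e : rel T) : {set {set T}} :=
  [set A : {set T} | [exists x : T, exists y : T, (A == [set x; y]) && e x y]].

Definition induced_matching (T : finType) (e : rel T) (E : {set {set T}}) : Prop :=
  E \subset edges e /\
  forall A B : {set T}, A \in E -> B \in E -> A != B ->
    forall a b : T, a \in A -> b \in B -> a != b /\ ~~ e a b.

Definition cross_edges (T : finType) (t : nat) (e : rel T) (f : T -> 'I_t)
  : {set {set T}} :=
  [set A : {set T} | [exists x : T, exists y : T,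
     [&& A == [set x; y], e x y & f x != f y]]].

(* Edges xy with {f x, f y} = {i, i+1} (0-based labels). *)
Definition edges_between (T : finType) (t : nat) (e : rel T) (f : T -> 'I_t)
  (i : nat) : {set {set T}} :=
  [set A : {set T} | [exists x : T, exists y : T,
     [&& A == [set x; y], e x y &
         (((val (f x) == i) && (val (f y) == i.+1))
          || ((val (f y) == i) && (val (f x) == i.+1)))]]].

From HB Require Import structures.
From mathcomp Require Import all_boot all_order zify.
Set Implicit Arguments. Unset Strict Implicit. Unset Printing Implicit Defensive.

Lemma uniq_size_le_card (T : finType) (s : seq T) : uniq s -> size s <= #|T|.
Proof. by move=> /card_uniqP <-; apply: max_card. Qed.

Section TwoRegular.

Variables (T : finType) (e : rel T).
Hypotheses (Hsym : symmetric e) (Hirr : irreflexive e) (Hreg : two_regular e).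

Lemma two_regular_nbrP u a b v :
  e u a -> e u b -> a != b -> e u v -> (v == a) || (v == b).
Proof.
move=> ua ub ab uv; apply/contraT; rewrite negb_or => /andP [va vb].
have : #|[set v; a; b]| <= #|[set y | e u y]|.
  by apply/subset_leq_card/subsetP => y; rewrite !inE => /orP [/orP [] | ] /eqP ->.
by rewrite (Hreg u) -setUA cardsU1 cards2 !inE negb_or va vb ab.
Qed.

Lemma exists_nbr_neq u w : exists2 z, e u z & z != w.
Proof.
have : 0 < #|[set y | e u y] :\ w|.
  by have := cardsD1 w [set y | e u y]; rewrite Hreg; case: (w \in _) => /=; lia.
by case/card_gt0P => z; rewrite !inE => /andP [zw uz]; exists z.
Qed.

Lemma path_extend_maximal x p : uniq (x :: p) -> path e x p ->
  exists q, [/\ uniq (x :: p ++ q), path e x (p ++ q) &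
                forall z, e (last x (p ++ q)) z -> z \in x :: p ++ q].
Proof.
move: {-1}(#|T| - size p) (leqnn (#|T| - size p)) => k.
elim: k p => [|k IH] p Hk Hu Hp;
  (case: (pickP (fun z => e (last x p) z && (z \notin x :: p))) => [z /andP [lz zn] | Hmax];
   last by exists [::]; rewrite cats0; split=> // z lz; apply/negPn/negP => zn;
           move: (Hmax z); rewrite /= lz zn).
- have /uniq_size_le_card /= : uniq (z :: x :: p) by rewrite cons_uniq zn Hu.
  move: Hk; rewrite leqn0 subn_eq0 => Hk /leq_trans/(_ Hk).
  by rewrite ltnNge leqW.
- have [|||q [q1 q2 q3]] := IH (rcons p z).
  + by rewrite size_rcons; lia.
  + by rewrite -rcons_cons rcons_uniq zn Hu.
  + by rewrite rcons_path Hp lz.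
  by exists (z :: q); rewrite -cats1 -catA in q1 q2 q3.
Qed.

Lemma exists_cycle_through x :
  exists c, [/\ uniq c, cycle e c, 3 <= size c & x \in c].
Proof.
have [y xy _] := exists_nbr_neq x x.
have yx : y != x by apply: contraTneq xy => ->; rewrite Hirr.
have xy_uniq : uniq [:: x; y] by rewrite /= inE eq_sym yx.
have xy_path : path e x [:: y] by rewrite /= xy.
have [q [q1 q2 q3]] := path_extend_maximal xy_uniq xy_path.
rewrite cat1s in q1 q2 q3.
set c := x :: y :: q in q1 q2 q3 *.
have [m sizeE] : exists m, size (y :: q) = m by exists (size q).+1.
have c_path i : i < m -> e (nth x c i) (nth x c i.+1).
  by rewrite -sizeE; apply: (elimT (pathP x) q2).
have sizeC : size c = m.+1 by rewrite -sizeE.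
have c_neq i j : i <= m -> j <= m -> i != j -> nth x c i != nth x c j.
  by move=> im jm ij; rewrite nth_uniq // sizeC.
have lastE : last x (y :: q) = nth x c m by rewrite (last_nth x) sizeE.
have [z lz zp] := exists_nbr_neq (last x (y :: q)) (nth x c m.-1).
have [j jm zj] : exists2 j, j <= m & nth x c j = z.
  by exists (index z c); [rewrite -ltnS -sizeC index_mem q3 | rewrite nth_index ?q3].
have jm1 : j != m.-1 by apply: contra zp => /eqP <-; rewrite zj.
have j0 : j = 0.
  have jm' : j != m by apply: contraTneq lz => jE; rewrite lastE -jE zj Hirr.
  case: j jm jm1 jm' zj => [//|k] jm jm1 jm' zj; exfalso.
  have km : k.+2 < m by clear -jm jm1 jm'; lia.
  have e1 : e z (nth x c k) by rewrite -zj Hsym c_path // ltnW // ltnW.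
  have e2 : e z (nth x c k.+2) by rewrite -zj c_path // ltnW.
  have e3 : e z (nth x c m) by rewrite -lastE Hsym.
  have ne : nth x c k != nth x c k.+2 by apply: c_neq; clear -km; lia.
  have ne1 : nth x c m != nth x c k by apply: c_neq; clear -km; lia.
  have ne2 : nth x c m != nth x c k.+2 by apply: c_neq; clear -km; lia.
  by move: (two_regular_nbrP e1 e2 ne e3); rewrite (negbTE ne1) (negbTE ne2).
have zx : z = x by rewrite -zj j0.
exists c; split => //; last by rewrite inE eqxx.
- by rewrite /c /cycle rcons_path q2 -zx.
- by move: jm1; rewrite sizeC j0; clear; lia.
Qed.


Definition next_idx (L i : nat) := if i.+1 < L then i.+1 else 0.
Definition prev_idx (L i : nat) := if i == 0 then L.-1 else i.-1.

Lemma next_idx_lt L i : i < L -> next_idx L i < L.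
Proof. by rewrite /next_idx; case: ifP => //; lia. Qed.

Lemma prev_idx_lt L i : i < L -> prev_idx L i < L.
Proof. by rewrite /prev_idx; case: ifP => _; lia. Qed.

Lemma prev_idxK L i : i < L -> next_idx L (prev_idx L i) = i.
Proof. by rewrite /next_idx /prev_idx; case: ifP => /eqP; case: ifP; lia. Qed.

Lemma next_prev_idx_neq L i : 3 <= L -> i < L -> next_idx L i != prev_idx L i.
Proof. by rewrite /next_idx /prev_idx; case: ifP => /eqP; case: ifP; lia. Qed.

Lemma cycle_nth_next (c : seq T) x0 i :
  cycle e c -> i < size c -> e (nth x0 c i) (nth x0 c (next_idx (size c) i)).
Proof.
case: c => [|a r] //= /(pathP x0) Hc il.
move: (Hc i); rewrite size_rcons => /(_ il).
rewrite -rcons_cons !nth_rcons /= /next_idx.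
by rewrite il; move: il; rewrite ltnS leq_eqVlt => /orP [/eqP -> | ilt]; rewrite ?ltnn ?eqxx // ltnS ilt.
Qed.

Definition simple_cycle (c : seq T) := [&& uniq c, cycle e c & 3 <= size c].

Lemma simple_cycle_nth_nbrP (c : seq T) x0 i v : simple_cycle c -> i < size c ->
  e (nth x0 c i) v ->
  (v == nth x0 c (next_idx (size c) i)) || (v == nth x0 c (prev_idx (size c) i)).
Proof.
case/and3P => cu cc c3 il; apply: two_regular_nbrP.
- exact: cycle_nth_next.
- by rewrite Hsym -{2}(prev_idxK il) cycle_nth_next // prev_idx_lt.
- by rewrite nth_uniq ?next_idx_lt ?prev_idx_lt ?next_prev_idx_neq.
Qed.

Lemma simple_cycle_nth_adj (c : seq T) x0 i j : simple_cycle c ->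
  i < size c -> j < size c ->
  e (nth x0 c i) (nth x0 c j) = (j == next_idx (size c) i) || (i == next_idx (size c) j).
Proof.
move=> cs il jl; have /and3P [cu cc _] := cs.
apply/idP/idP => [/(simple_cycle_nth_nbrP cs il) | /orP [] /eqP ->].
- rewrite !nth_uniq ?next_idx_lt ?prev_idx_lt // => /orP [-> // | /eqP ->].
  by rewrite prev_idxK // eqxx orbT.
- exact: cycle_nth_next.
- by rewrite Hsym cycle_nth_next.
Qed.

Lemma simple_cycle_nbr_mem (c : seq T) u v : simple_cycle c -> u \in c -> e u v -> v \in c.
Proof.
move=> cs uc; rewrite -(nth_index u uc) => /(simple_cycle_nth_nbrP cs).
rewrite index_mem => /(_ uc) /orP [] /eqP ->; apply: mem_nth.
- by rewrite next_idx_lt ?index_mem.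
- by rewrite prev_idx_lt ?index_mem.
Qed.

Lemma simple_cycle_subset (c c' : seq T) y :
  simple_cycle c' -> cycle e c -> y \in c -> y \in c' -> {subset c <= c'}.
Proof.
move=> cs' cc yc yc' z zc.
case: (rot_to yc) => i s' Hr.
have : cycle e (y :: s') by rewrite -Hr rot_cycle.
rewrite /= rcons_path => /andP [ps _].
have : z \in y :: s' by rewrite -Hr mem_rot.
clear Hr yc; elim: s' y yc' ps => [|w s' IH] y yc' /=; first by move=> _; rewrite inE => /eqP ->.
case/andP => yw ps; rewrite inE => /orP [/eqP -> // | zs].
exact: IH (simple_cycle_nbr_mem cs' yc' yw) ps zs.
Qed.

Lemma exists_cycle_partition :
  exists cs : seq (seq T),
    [/\ uniq (flatten cs), forall x, x \in flatten cs & all simple_cycle cs].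
Proof.
suff ext k (cs0 : seq (seq T)) : #|T| - size (flatten cs0) <= k ->
    uniq (flatten cs0) -> all simple_cycle cs0 ->
    exists cs : seq (seq T),
      [/\ uniq (flatten cs), forall x, x \in flatten cs & all simple_cycle cs].
  exact: (ext _ [::]).
elim: k cs0 => [|k IH] cs0 Hk Hu Hcs;
  (case: (pickP (fun x => x \notin flatten cs0)) => [x xn | Hcov];
   last by exists cs0; split=> // x; apply/negPn; rewrite Hcov).
- have /uniq_size_le_card /= : uniq (x :: flatten cs0) by rewrite cons_uniq xn Hu.
  move: Hk; rewrite leqn0 subn_eq0 => Hk /leq_trans/(_ Hk).
  by rewrite ltnn.
- have [c [cu cc c3 xc]] := exists_cycle_through x.
  have disj y : y \in c -> y \notin flatten cs0.
    move=> yc; apply/negP => /flattenP [c' c'in yc'].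
    move/negP: xn; apply; apply/flattenP; exists c' => //.
    exact: simple_cycle_subset (allP Hcs c' c'in) cc yc yc' x xc.
  apply: (IH (c :: cs0)); rewrite ?[flatten (_ :: _)]/(c ++ flatten cs0).
  + rewrite size_cat; have : 0 < size c by case: (c) xc.
    by move: Hk; clear; move: #|T| (size c) (size (flatten cs0)) => N a b; lia.
  + rewrite cat_uniq cu Hu andbT; apply/hasPn => y /= yf.
    by apply/negP => yc; move: (disj y yc); rewrite yf.
  + by rewrite /= Hcs andbT /simple_cycle cu cc c3.
Qed.

End TwoRegular.

Definition zigzag (L q : nat) := if q == 0 then 0 else if odd q then q.+1./2 else L - q./2.

Lemma zigzag_cases L q : exists a,
  (q = a.*2.+1 /\ zigzag L q = a.+1) \/ (q = a.*2 /\ zigzag L q = if a == 0 then 0 else L - a).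
Proof.
have zigzag_odd a : zigzag L a.*2.+1 = a.+1.
  by rewrite /zigzag /= odd_double /= doubleK.
have zigzag_even a : zigzag L a.*2 = if a == 0 then 0 else L - a.
  by rewrite /zigzag odd_double doubleK; case: a.
elim: q => [|q [a [[-> _] | [-> _]]]]; first by exists 0; right.
- by exists a.+1; right; rewrite -doubleS zigzag_even.
- by exists a; left; rewrite zigzag_odd.
Qed.

Lemma zigzag_lt L q : q < L -> zigzag L q < L.
Proof.
by have [a [[-> ->] | [-> ->]]] := zigzag_cases L q; try case: (a =P 0) => [->|?]; lia.
Qed.

Lemma zigzag_inj L p q : p < L -> q < L -> zigzag L p = zigzag L q -> p = q.
Proof.
have [a [[-> ->] | [-> ->]]] := zigzag_cases L p;
have [b [[-> ->] | [-> ->]]] := zigzag_cases L q;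
by (try case: (a =P 0) => [->|?]); (try case: (b =P 0) => [->|?]); lia.
Qed.

Definition cycle_adj (L i j : nat) := (j == next_idx L i) || (i == next_idx L j).

Lemma zigzag_adj L p q : 5 <= L -> p < q -> q < L ->
  cycle_adj L (zigzag L p) (zigzag L q) =
  (q == p.+2) || (q == p.+1) && ((p == 0) || (q.+1 == L)).
Proof.
move=> L5; rewrite /cycle_adj /next_idx.
have [a [[-> ->] | [-> ->]]] := zigzag_cases L p;
have [b [[-> ->] | [-> ->]]] := zigzag_cases L q;
(try case: (a =P 0) => [->|?]); (try case: (b =P 0) => [->|?]);
repeat case: ifP => [?|/negbT ?]; rewrite -!muln2 => ? ?; apply/idP/idP; lia.
Qed.

Definition zigzag_seq (T : Type) (x0 : T) (c : seq T) :=
  mkseq (fun q => nth x0 c (zigzag (size c) q)) (size c).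

Lemma size_zigzag_seq (T : Type) (x0 : T) c : size (zigzag_seq x0 c) = size c.
Proof. exact: size_mkseq. Qed.

Lemma nth_zigzag_seq (T : Type) (x0 : T) c q : q < size c ->
  nth x0 (zigzag_seq x0 c) q = nth x0 c (zigzag (size c) q).
Proof. exact: nth_mkseq. Qed.

Lemma perm_zigzag_seq (T : eqType) (x0 : T) c : uniq c -> perm_eq (zigzag_seq x0 c) c.
Proof.
move=> cu; have zu : uniq (zigzag_seq x0 c).
  rewrite map_inj_in_uniq ?iota_uniq // => p q; rewrite !mem_iota !add0n => pl ql.
  by move/eqP; rewrite nth_uniq ?zigzag_lt // => /eqP; apply: zigzag_inj.
have sub : {subset zigzag_seq x0 c <= c}.
  by move=> y /mapP [q]; rewrite mem_iota add0n => ql ->; rewrite mem_nth ?zigzag_lt.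
have [_ zc] := uniq_min_size zu sub (eq_leq (esym (size_zigzag_seq x0 c))).
exact: uniq_perm.
Qed.

Lemma zigzag_seq_adj (T : finType) (e : rel T) (x0 : T) c p q :
  symmetric e -> two_regular e -> simple_cycle e c -> 5 <= size c -> p < q -> q < size c ->
  e (nth x0 (zigzag_seq x0 c) p) (nth x0 (zigzag_seq x0 c) q) =
  (q == p.+2) || (q == p.+1) && ((p == 0) || (q.+1 == size c)).
Proof.
move=> Hsym Hreg cs c5 pq qL; have pL := ltn_trans pq qL.
rewrite !nth_zigzag_seq // simple_cycle_nth_adj ?zigzag_lt //.
exact: zigzag_adj.
Qed.

Fixpoint offsets (T : Type) (cs : seq (seq T)) : seq nat :=
  if cs is c :: cs' then 0 :: map (addn (size c)) (offsets cs') else [:: 0].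

Definition zigzag_flatten (T : Type) (x0 : T) (cs : seq (seq T)) :=
  flatten (map (zigzag_seq x0) cs).

Definition gapped (k : nat) (os : seq nat) :=
  {in os &, forall o1 o2, o1 < o2 -> o1 + k <= o2}.

Lemma mem_map_addn L (s : seq nat) x : (x \in map (addn L) s) = (L <= x) && (x - L \in s).
Proof.
apply/mapP/andP => [[o os ->] | [Lx xs]]; first by rewrite leq_addr addKn.
by exists (x - L); rewrite ?subnKC.
Qed.

Lemma mem0_offsets (T : Type) (cs : seq (seq T)) : 0 \in offsets cs.
Proof. by case: cs => [|c cs]; rewrite /= inE. Qed.

Lemma size_mem_offsets (T : Type) (cs : seq (seq T)) : size (flatten cs) \in offsets cs.
Proof.
elim: cs => [|c cs IH] /=; first by rewrite inE.
by rewrite inE mem_map_addn size_cat leq_addr addKn IH orbT.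
Qed.

Lemma size_zigzag_flatten (T : Type) (x0 : T) cs :
  size (zigzag_flatten x0 cs) = size (flatten cs).
Proof.
by elim: cs => [|c cs IH] //=; rewrite !size_cat size_zigzag_seq -IH.
Qed.

Lemma offsets_gapped (T : Type) k (cs : seq (seq T)) :
  all (fun c => k <= size c) cs -> gapped k (offsets cs).
Proof.
elim: cs => [|c cs IH]; first by move=> _ o1 o2; rewrite !inE => /eqP -> /eqP ->.
case/andP => ck /IH {}IH o1 o2; rewrite /= !inE !mem_map_addn.
case/orP => [/eqP -> | /andP [h1 h2]]; case/orP => [/eqP -> | /andP [h3 h4]] //.
- by rewrite add0n => _; apply: leq_trans ck h3.
- by move=> h; have := IH _ _ h2 h4; move: h h1 h3; clear; lia.
Qed.

Lemma perm_zigzag_flatten (T : eqType) (x0 : T) (cs : seq (seq T)) :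
  all uniq cs -> perm_eq (zigzag_flatten x0 cs) (flatten cs).
Proof.
elim: cs => [|c cs IH] //= /andP [cu /IH]; exact/perm_cat/perm_zigzag_seq.
Qed.

Definition layout_adj (os : seq nat) (p q : nat) :=
  ~~ has (fun o => p < o <= q) os &&
  ((q == p.+2) || (q == p.+1) && ((p \in os) || (q.+1 \in os))).

Lemma layout_adj_cons_lt L os p q : 0 \in os -> p < q -> q < L ->
  layout_adj (0 :: map (addn L) os) p q = (q == p.+2) || (q == p.+1) && ((p == 0) || (q.+1 == L)).
Proof.
move=> os0 pq qL; rewrite /layout_adj /= !inE !mem_map_addn.
have -> : has (fun o => p < o <= q) (map (addn L) os) = false.
  by apply/hasPn => _ /mapP [o _ ->]; apply/negP; lia.
have -> : (L <= p) = false by lia.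
by case: (ltngtP q.+1 L) => [_ | h | ->]; rewrite ?subnn ?os0 ?orbT ?orbF //; lia.
Qed.

Lemma layout_adj_cons_cross L os p q :
  0 \in os -> p < L -> L <= q -> ~~ layout_adj (0 :: map (addn L) os) p q.
Proof.
move=> os0 pL Lq; rewrite /layout_adj negb_and negbK; apply/orP; left.
by apply/hasP; exists (L + 0); rewrite /= ?inE ?map_f ?addn0 ?pL ?orbT.
Qed.

Lemma layout_adj_cons_ge L os p q : 0 < L -> L <= p -> p < q ->
  layout_adj (0 :: map (addn L) os) p q = layout_adj os (p - L) (q - L).
Proof.
move=> L0 Lp pq; rewrite /layout_adj /= !inE !mem_map_addn has_map.
have -> : has (preim (addn L) (fun o => p < o <= q)) os =
          has (fun o => p - L < o <= q - L) os by apply: eq_has => o /=; lia.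
have -> : (p == 0) = false by lia.
have -> : q.+1 - L = (q - L).+1 by lia.
have -> : (q == p.+2) = (q - L == (p - L).+2) by apply/eqP/eqP; lia.
have -> : (q == p.+1) = (q - L == (p - L).+1) by apply/eqP/eqP; lia.
by rewrite Lp (leq_trans Lp (leq_trans (ltnW pq) (leqnSn q))).
Qed.

Lemma zigzag_flatten_adj (T : finType) (e : rel T) (x0 : T) (cs : seq (seq T)) p q :
  symmetric e -> two_regular e ->
  all (simple_cycle e) cs -> all (fun c => 5 <= size c) cs -> uniq (flatten cs) ->
  p < q -> q < size (flatten cs) ->
  e (nth x0 (zigzag_flatten x0 cs) p) (nth x0 (zigzag_flatten x0 cs) q) =
  layout_adj (offsets cs) p q.
Proof.
move=> Hsym Hreg; elim: cs p q => [|c cs IH] p q //= /andP [cs_c css] /andP [c5 cs5].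
rewrite cat_uniq => /and3P [cu disj fu] pq.
rewrite -[zigzag_flatten _ _]/(zigzag_seq x0 c ++ zigzag_flatten x0 cs) size_cat => qlt.
rewrite !nth_cat size_zigzag_seq.
case: (ltnP q (size c)) => qL.
  by rewrite (ltn_trans pq qL) layout_adj_cons_lt ?mem0_offsets ?zigzag_seq_adj.
case: (ltnP p (size c)) => pL; last first.
  by rewrite layout_adj_cons_ge ?IH //; lia.
rewrite (negbTE (layout_adj_cons_cross (mem0_offsets cs) pL qL)) /=.
(* A neighbour of a vertex of the cycle c lies on c, hence not on the other cycles. *)
apply/negP => /(simple_cycle_nbr_mem Hsym Hreg cs_c) => yc.
move/hasP: disj; apply; exists (nth x0 (zigzag_flatten x0 cs) (q - size c)).
  have csu : all uniq cs by apply/allP => c' /(allP css) /and3P [].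
  rewrite -(perm_mem (perm_zigzag_flatten x0 csu)) mem_nth //.
  by rewrite size_zigzag_flatten ltn_subLR.
by apply: yc; rewrite -(perm_mem (perm_zigzag_seq x0 cu)) mem_nth // size_zigzag_seq.
Qed.

Lemma layout_adj_lt os p q : layout_adj os p q -> p < q <= p.+2.
Proof. by case/andP => _ /orP [/eqP -> | /andP [/eqP -> _]]; lia. Qed.

Definition far (os : seq nat) (B : nat) := ~~ has (fun o => (B <= o + 2) && (o <= B + 2)) os.

Section FarPoint.

Variables (os : seq nat) (B : nat).
Hypothesis farB : far os B.

Lemma far_notin o : o \in os -> (B <= o + 2) && (o <= B + 2) = false.
Proof. by move=> oin; apply/negbTE/negP => oB; move/hasPn: farB => /(_ o oin); rewrite oB. Qed.

Lemma far_ge0 : 0 \in os -> 3 <= B.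
Proof. by move/far_notin; lia. Qed.

Lemma far_leN N : N \in os -> B <= N -> B + 3 <= N.
Proof. by move/far_notin; lia. Qed.

Lemma far_no_offset_between p q : B <= p + 2 -> q <= B + 2 -> ~~ has (fun o => p < o <= q) os.
Proof. by move=> h1 h2; apply/hasPn => o /far_notin; lia. Qed.

Lemma far_adj_crossing p q : p < B <= q -> layout_adj os p q ->
  (p == B - 2) && (q == B) || (p == B - 1) && (q == B + 1).
Proof.
move=> pBq /andP [_ /orP [/eqP qE | /andP [/eqP qE /orP [] /far_notin]]]; lia.
Qed.

Lemma far_adj_lo : 2 <= B -> layout_adj os (B - 2) B.
Proof. by move=> B2; rewrite /layout_adj far_no_offset_between //=; lia. Qed.

Lemma far_adj_hi : 1 <= B -> layout_adj os (B - 1) (B + 1).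
Proof. by move=> B1; rewrite /layout_adj far_no_offset_between //=; lia. Qed.

Lemma far_not_adj p q : 3 <= B -> B - 2 <= p -> q <= B + 1 ->
  ~~ ((p == B - 2) && (q == B) || (p == B - 1) && (q == B + 1)) -> ~~ layout_adj os p q.
Proof.
move=> B3 h1 h2 hpq; apply/negP => /andP [_ /orP [/eqP qE | /andP [/eqP qE /orP [] /far_notin]]];
  move: hpq; lia.
Qed.

End FarPoint.

Lemma count_iota_downclosed (Q : pred nat) m i :
  (forall k, k.+1 < m -> Q k.+1 -> Q k) -> i < m -> (i < count Q (iota 0 m)) = Q i.
Proof.
move=> Qdown im.
have Qdown' j k : j < m -> k <= j -> Q j -> Q k.
  elim: j => [|j IH] jm; first by rewrite leqn0 => /eqP ->.
  rewrite leq_eqVlt => /orP [/eqP -> // | kj] /(Qdown _ jm).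
  exact: IH (ltnW jm) kj.
have -> : iota 0 m = iota 0 i.+1 ++ iota i.+1 (m - i.+1) by rewrite -iotaD subnKC.
rewrite count_cat; case: (boolP (Q i)) => Qi.
  rewrite (@eq_in_count _ _ predT) ?count_predT ?size_iota ?leq_addr // => k.
  by rewrite mem_iota ltnS => /andP [_ ki]; apply: Qdown' Qi.
rewrite (@eq_in_count _ _ pred0 (iota i.+1 _)) ?count_pred0 ?addn0; last first.
  move=> k; rewrite mem_iota => /andP [ik km]; apply/negbTE/negP => Qk.
  by move/negP: Qi; apply; apply: Qdown' Qk; [rewrite -(subnKC im) | apply: ltnW].
apply/negbTE; rewrite -leqNgt -addn1 iotaD count_cat /= (negbTE Qi) !addn0.
by have := count_size Q (iota 0 i); rewrite size_iota.
Qed.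

Lemma count_iota_interval lo hi n : lo <= hi -> hi <= n ->
  count (fun p => lo <= p < hi) (iota 0 n) = hi - lo.
Proof.
move=> h1 h2.
have -> : iota 0 n = iota 0 lo ++ iota lo (hi - lo) ++ iota hi (n - hi).
  have nE : n = lo + ((hi - lo) + (n - hi)) by lia.
  by rewrite {1}nE !iotaD add0n subnKC.
rewrite !count_cat (@eq_in_count _ _ pred0 (iota 0 lo)); last first.
  by move=> k; rewrite mem_iota => /andP [_ k1]; apply/negbTE; lia.
rewrite (@eq_in_count _ _ predT (iota lo _)); last first.
  by move=> k; rewrite mem_iota subnKC // => /andP [k1 k2]; rewrite k1 k2.
rewrite (@eq_in_count _ _ pred0 (iota hi _)); last first.
  by move=> k; rewrite mem_iota => /andP [k1 _]; apply/negbTE; lia.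
by rewrite !count_pred0 count_predT size_iota add0n addn0.
Qed.

Lemma count_eq_geq_gt (f : nat -> nat) s i :
  count (fun x => f x == i) s = count (fun x => i <= f x) s - count (fun x => i < f x) s.
Proof.
elim: s => //= x s ->.
have : count (fun x => i < f x) s <= count (fun x => i <= f x) s.
  by apply: sub_count => y /ltnW.
by case: (ltngtP i (f x)) => [h | h | ->] /=; lia.
Qed.

Definition label m (u d : nat -> nat) p := count (fun k => u k <= p < d k) (iota 0 m).

Definition nested_intervals m n (u d : nat -> nat) :=
  [/\ forall k, k.+1 < m -> u k + 20 <= u k.+1,
      forall k, k.+1 < m -> d k.+1 + 20 <= d k,
      forall k, k < m -> u k + 20 <= d k
    & forall k, k < m -> d k <= n].

Section NestedIntervals.

Variables (m n : nat) (u d : nat -> nat).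
Hypothesis Hnest : nested_intervals m n u d.
Local Notation label := (label m u d).

Lemma nested_u_lt k k' : k < k' -> k' < m -> u k + 20 <= u k'.
Proof.
case: Hnest => Hu _ _ _; elim: k' => [|k' IH] // kk km.
move: kk; rewrite ltnS leq_eqVlt => /orP [/eqP -> | kk]; first exact: Hu.
by have := IH kk (ltnW km); have := Hu k' km; lia.
Qed.

Lemma nested_d_gt k k' : k < k' -> k' < m -> d k' + 20 <= d k.
Proof.
case: Hnest => _ Hd _ _; elim: k' => [|k' IH] // kk km.
move: kk; rewrite ltnS leq_eqVlt => /orP [/eqP -> | kk]; first exact: Hd.
by have := IH kk (ltnW km); have := Hd k' km; lia.
Qed.

Lemma nested_ud k k' : k < m -> k' < m -> u k + 20 <= d k'.
Proof.
case: Hnest => _ _ Hud _ km k'm; case: (ltngtP k k') => [kk | kk | <-]; last exact: Hud.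
- by have := nested_u_lt kk k'm; have := Hud _ k'm; lia.
- by have := nested_d_gt kk km; have := Hud _ km; lia.
Qed.

Lemma label_gtE i p : i < m -> (i < label p) = (u i <= p < d i).
Proof.
move=> im; apply: count_iota_downclosed => // k km /andP [h1 h2].
by case: Hnest => Hu Hd _ _; have := Hu k km; have := Hd k km; lia.
Qed.

Lemma label_le p : label p <= m.
Proof. by have := count_size (fun k => u k <= p < d k) (iota 0 m); rewrite size_iota. Qed.

Lemma count_label i : i <= m ->
  count (fun p => label p == i) (iota 0 n) =
  (if i == 0 then n else d i.-1 - u i.-1) - (if i == m then 0 else d i - u i).
Proof.
move=> im; rewrite count_eq_geq_gt.
have ud k : k < m -> u k <= d k by move=> km; have := nested_ud km km; lia.
have dn k : k < m -> d k <= n by case: Hnest => _ _ _; apply.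
congr (_ - _).
- case: i im => [|i] im /=; first by rewrite count_predT size_iota.
  by rewrite (eq_count (a2 := fun p => u i <= p < d i)) ?count_iota_interval ?ud ?dn //
    => p /=; rewrite label_gtE.
- case: eqVneq => [-> | ne]; first by rewrite (eq_count (a2 := pred0)) ?count_pred0 // => p;
    rewrite ltnNge label_le.
  have im' : i < m by rewrite ltn_neqAle ne im.
  by rewrite (eq_count (a2 := fun p => u i <= p < d i)) ?count_iota_interval ?ud ?dn //
    => p /=; rewrite label_gtE.
Qed.

Lemma label_eqE i p : i <= m ->
  (label p == i) = ((i == 0) || (u i.-1 <= p < d i.-1)) && ((i == m) || ~~ (u i <= p < d i)).
Proof.
move=> im; rewrite eqn_leq andbC; congr (_ && _).
- by case: i im => [|i] im //=; rewrite label_gtE.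
- case: eqVneq => [-> | ne] /=; first by rewrite label_le.
  by rewrite leqNgt -label_gtE // ltn_neqAle ne im.
Qed.

Lemma label_up k p q : k < m -> p < u k <= q -> q <= p.+2 ->
  label p = k /\ label q = k.+1.
Proof.
case: Hnest => Hu _ _ _ km /andP [pk kq] qp; have ukdk := nested_ud km km.
split; apply/eqP; rewrite label_eqE ?(ltnW km) //; apply/andP; split.
- case: k km pk kq ukdk => [|k] // km pk kq ukdk; apply/orP; right.
  by have := Hu k km; have := nested_ud km (ltnW km); clear -pk kq qp; rewrite /=; lia.
- by rewrite leqNgt pk orbT.
- by apply/orP; right; rewrite kq /=; clear -qp pk ukdk; lia.
- case: (ltnP k.+1 m) => [k1m | mk]; last by rewrite (_ : k.+1 = m) ?eqxx //; lia.
  by rewrite negb_and -ltnNge; have := Hu k k1m; clear -qp pk; lia.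
Qed.

Lemma label_down k p q : k < m -> p < d k <= q -> q <= p.+2 ->
  label p = k.+1 /\ label q = k.
Proof.
case: Hnest => _ Hd _ _ km /andP [pk kq] qp; have ukdk := nested_ud km km.
split; apply/eqP; rewrite label_eqE ?(ltnW km) //; apply/andP; split.
- by apply/orP; right; rewrite pk andbT /=; clear -qp kq ukdk; lia.
- case: (ltnP k.+1 m) => [k1m | mk]; last by rewrite (_ : k.+1 = m) ?eqxx //; lia.
  by rewrite negb_and -leqNgt; have := Hd k k1m; clear -qp kq; lia.
- case: k km pk kq ukdk => [|k] // km pk kq ukdk; apply/orP; right.
  by have := Hd k km; have := nested_ud (ltnW km) km; clear -pk kq qp; rewrite /=; lia.
- by rewrite negb_and -leqNgt kq !orbT.
Qed.

Lemma label_step p q : p < q <= p.+2 ->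
  [\/ label p = label q,
      exists2 k, k < m & [/\ p < u k <= q, label p = k & label q = k.+1] |
      exists2 k, k < m & [/\ p < d k <= q, label p = k.+1 & label q = k]].
Proof.
case/andP => pq qp.
have [/hasP [k] | no_u] := boolP (has (fun k => p < u k <= q) (iota 0 m)).
  rewrite mem_iota add0n => km pkq; have [lp lq] := label_up km pkq qp.
  by apply: Or32; exists k.
have [/hasP [k] | no_d] := boolP (has (fun k => p < d k <= q) (iota 0 m)).
  rewrite mem_iota add0n => km pkq; have [lp lq] := label_down km pkq qp.
  by apply: Or33; exists k.
apply: Or31; apply: eq_in_count => k; rewrite mem_iota add0n => km.
move/hasPn: no_u => /(_ k); move/hasPn: no_d => /(_ k).
rewrite mem_iota add0n km => /(_ isT) nd /(_ isT) nu.
by move: nd nu; clear -pq; case: (leqP (u k) p); case: (leqP (u k) q);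
  case: (ltnP p (d k)); case: (ltnP q (d k)) => //= *; lia.
Qed.

Lemma label_lipschitz p q : p < q <= p.+2 -> label p <= label q + 1 /\ label q <= label p + 1.
Proof. by move/label_step => [-> | [k _ [_ -> ->]] | [k _ [_ -> ->]]]; lia. Qed.

End NestedIntervals.

Lemma not_far_far os B1 B2 : gapped 15 os -> B1 + 5 <= B2 <= B1 + 10 ->
  far os B1 || far os B2.
Proof.
move=> G B12; apply/contraT; rewrite negb_or !negbK.
case/andP => /hasP [o1 o1in /andP [h1 h2]] /hasP [o2 o2in /andP [h3 h4]].
have o12 : o1 < o2 by lia.
by have := G _ _ o1in o2in o12; lia.
Qed.

Lemma exists_far_shift os W1 W2 : gapped 15 os ->
  exists2 dl, 20 <= dl <= 30 & far os (W1 + dl) && far os (W2 + dl).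
Proof.
move=> G.
(* Far from the offsets fails for at most one of W + 20, W + 25, W + 30. *)
have F W : [&& far os (W + 20) || far os (W + 25), far os (W + 20) || far os (W + 30)
             & far os (W + 25) || far os (W + 30)].
  by apply/and3P; split; apply: not_far_far => //; lia.
suff : [|| far os (W1 + 20) && far os (W2 + 20), far os (W1 + 25) && far os (W2 + 25)
         | far os (W1 + 30) && far os (W2 + 30)].
  by case/or3P => ?; [exists 20 | exists 25 | exists 30].
move: (F W1) (F W2).
by case: (far os (W1 + 20)); case: (far os (W1 + 25)); case: (far os (W1 + 30));
  case: (far os (W2 + 20)); case: (far os (W2 + 25)); case: (far os (W2 + 30)).
Qed.

Section Boundaries.

Variables (os : seq nat) (m n : nat) (ns N : nat -> nat).
Hypotheses (Hgap : gapped 15 os) (Hns : forall j, j <= m -> 50 <= ns j).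
Hypotheses (N0 : N 0 = ns 0) (NS : forall k, N k.+1 = N k + ns k.+1) (Nm : N m = n).

Lemma exists_far_steps M : exists u : nat -> nat, forall k, k < M ->
  let u' := if k is k'.+1 then u k' else 0 in
  [/\ u' + 20 <= u k <= u' + 30, far os (u k) & far os (u k + (n - N k))].
Proof.
elim: M => [|M [u Hu]]; first by exists (fun _ => 0).
set W := if M is M'.+1 then u M' else 0.
have [dl dlP /andP [far1 far2]] := exists_far_shift W (W + (n - N M)) Hgap.
exists (fun k => if k == M then W + dl else u k) => k.
rewrite ltnS leq_eqVlt => /orP [/eqP -> | kM].
  rewrite eqxx addnAC; split => //.
  by case: M Hu @W {far1 far2} => [|M] Hu /=; rewrite ?(ltn_eqF (ltnSn M)); lia.
rewrite (ltn_eqF kM); case: k kM => [|k] kM; first exact: Hu.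
by rewrite (ltn_eqF (ltnW kM)); apply: Hu.
Qed.

Lemma exists_boundaries : exists u d : nat -> nat,
  [/\ nested_intervals m n u d, forall k, k < m -> far os (u k) && far os (d k)
    & forall i, i <= m -> count (fun p => label m u d p == i) (iota 0 n) = ns i].
Proof.
have N_le k : k <= m -> N k <= n.
  rewrite -Nm; elim: m => [|m' IH]; first by rewrite leqn0 => /eqP ->.
  rewrite leq_eqVlt => /orP [/eqP -> // | km]; rewrite NS.
  exact: leq_trans (IH km) (leq_addr _ _).
have N_lt k : k < m -> N k + 50 <= n.
  by move=> km; have := N_le _ km; have := Hns km; rewrite NS; lia.
have [u Hu] := exists_far_steps m.
have u_N k : k < m -> u k + 20 <= N k.
  elim: k => [|k IH] km; have [/andP [h1 h2] _ _] := Hu _ km; first by have := Hns (leq0n m); rewrite N0; lia.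
  by have := IH (ltnW km); have := Hns (ltnW km); rewrite NS /= in h1 h2 *; lia.
pose d k := u k + (n - N k).
have Hnest : nested_intervals m n u d.
  split=> k km; rewrite /d.
  + by have [/andP [h1 _] _ _] := Hu _ km.
  + by have [/andP [_ h2] _ _] := Hu _ km; have := Hns (ltnW km); have := N_le _ (ltnW km); rewrite NS; lia.
  + by have := N_lt _ km; lia.
  + by have := u_N _ km; have := N_le _ (ltnW km); lia.
exists u, d; split=> // [k km | i im]; first by have [_ -> ->] := Hu _ km.
rewrite count_label // /d !addKn.
case: i im => [|i] im /=; case: eqVneq => [mE | _].
- by rewrite -Nm -mE N0 subn0.
- by have := N_le _ im; rewrite N0; lia.
- by rewrite -Nm -mE NS subn0; lia.
- by have := N_le _ im; rewrite NS; lia.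
Qed.

End Boundaries.

Definition cross_pair (B : nat) (h : bool) := if h then (B - 1, B + 1) else (B - 2, B).

Lemma cross_pair_sep os B h B' h' a a' :
  far os B -> 0 \in os -> (B == B') && (h != h') || (B + 20 <= B') ->
  a \in [:: (cross_pair B h).1; (cross_pair B h).2] ->
  a' \in [:: (cross_pair B' h').1; (cross_pair B' h').2] ->
  [&& a != a', ~~ layout_adj os a a' & ~~ layout_adj os a' a].
Proof.
move=> farB os0 BB'; have B3 := far_ge0 farB os0.
have no_adj p q : (q <= p) || (p.+2 < q) -> ~~ layout_adj os p q.
  by move=> pq; apply/negP => /layout_adj_lt; move: pq; lia.
case/orP: BB' => [/andP [/eqP <- hh'] | BB']; last first.
  by rewrite !inE /cross_pair; case: h; case: h' => /= /orP [] /eqP -> /orP [] /eqP ->;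
    rewrite !no_adj; lia.
have not_cross p q : B - 2 <= p -> q <= B + 1 ->
    ~~ ((p == B - 2) && (q == B) || (p == B - 1) && (q == B + 1)) -> ~~ layout_adj os p q.
  exact: far_not_adj.
move: hh'; rewrite !inE /cross_pair; case: h; case: h' => //= _ /orP [] /eqP -> /orP [] /eqP ->;
  rewrite !not_cross; lia.
Qed.

Definition adjacent_labels (a b i : nat) := (a == i) && (b == i.+1) || (b == i) && (a == i.+1).

Section PositionLabels.

Variables (os : seq nat) (m n : nat) (u d : nat -> nat).
Hypotheses (Hnest : nested_intervals m n u d)
  (Hfar : forall k, k < m -> far os (u k) && far os (d k))
  (os0 : 0 \in os) (osn : n \in os).

Local Notation label := (label m u d).
Local Notation bnd k b := (if b then u k else d k).

Lemma bnd_far k b : k < m -> far os (bnd k b).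
Proof. by move/Hfar/andP => []; case: b. Qed.

Lemma bnd_range k b : k < m -> 3 <= bnd k b /\ bnd k b + 3 <= n.
Proof.
move=> km; split; first exact: far_ge0 (bnd_far b km) os0.
apply: (far_leN (bnd_far b km) osn).
case: Hnest => _ _ Hud Hdn; have := Hud _ km; have := Hdn _ km; case: b; lia.
Qed.

Lemma bnd_sep k b k' b' : k < m -> k' < m -> bnd k b < bnd k' b' ->
  bnd k b + 20 <= bnd k' b'.
Proof.
move=> km k'm; have h1 := nested_ud Hnest km k'm; have h2 := nested_ud Hnest k'm km.
case: (ltngtP k k') => [kk | kk | kk].
- have := nested_u_lt Hnest kk k'm; have := nested_d_gt Hnest kk k'm; case: b; case: b' => /=; lia.
- have := nested_u_lt Hnest kk km; have := nested_d_gt Hnest kk km; case: b; case: b' => /=; lia.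
- by subst k'; case: b; case: b' => /=; lia.
Qed.


Lemma bnd_inj k b k' b' : k < m -> k' < m -> (k, b) != (k', b') -> bnd k b != bnd k' b'.
Proof.
move=> km k'm; have h1 := nested_ud Hnest km k'm; have h2 := nested_ud Hnest k'm km.
case: (ltngtP k k') => [kk _ | kk _ | kk neq].
- have := nested_u_lt Hnest kk k'm; have := nested_d_gt Hnest kk k'm; case: b; case: b' => /=; lia.
- have := nested_u_lt Hnest kk km; have := nested_d_gt Hnest kk km; case: b; case: b' => /=; lia.
- by subst k'; move: neq; case: b; case: b'; rewrite ?eqxx //= => _; lia.
Qed.

Lemma label_cross p q : layout_adj os p q -> label p != label q ->
  exists k b h, [/\ k < m, (p, q) = cross_pair (bnd k b) h
                 & adjacent_labels (label p) (label q) k].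
Proof.
move=> pq ne; have := layout_adj_lt pq => /(label_step Hnest).
have at_bnd k b : k < m -> p < bnd k b <= q -> exists h, (p, q) = cross_pair (bnd k b) h.
  move=> km pkq; have := far_adj_crossing (bnd_far b km) pkq pq.
  by case/orP => /andP [/eqP -> /eqP ->]; [exists false | exists true].
case=> [eq_pq | [k km [pkq -> ->]] | [k km [pkq -> ->]]]; first by rewrite eq_pq eqxx in ne.
- have [h ->] := at_bnd k true km pkq.
  by exists k, true, h; rewrite /adjacent_labels !eqxx.
- have [h ->] := at_bnd k false km pkq.
  by exists k, false, h; rewrite /adjacent_labels !eqxx orbT.
Qed.

Lemma cross_pair_labels k b h : k < m ->
  let P := cross_pair (bnd k b) h in
  layout_adj os P.1 P.2 && adjacent_labels (label P.1) (label P.2) k.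
Proof.
move=> km /=; have [B3 _] := bnd_range b km; have farB := bnd_far b km.
have -> : layout_adj os (cross_pair (bnd k b) h).1 (cross_pair (bnd k b) h).2.
  by case: h => /=; [apply: far_adj_hi | apply: far_adj_lo]; lia.
have [pBq qp] : (cross_pair (bnd k b) h).1 < bnd k b <= (cross_pair (bnd k b) h).2 /\
                (cross_pair (bnd k b) h).2 <= (cross_pair (bnd k b) h).1.+2.
  by case: h => /=; split; lia.
rewrite /adjacent_labels; clear B3 farB; move: pBq qp; case: b => pBq qp.
- by have [-> ->] := label_up Hnest km pBq qp; rewrite !eqxx.
- by have [-> ->] := label_down Hnest km pBq qp; rewrite !eqxx orbT.
Qed.

Lemma cross_pairs_sep k b h k' b' h' a a' : k < m -> k' < m -> (k, b, h) != (k', b', h') ->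
  a \in [:: (cross_pair (bnd k b) h).1; (cross_pair (bnd k b) h).2] ->
  a' \in [:: (cross_pair (bnd k' b') h').1; (cross_pair (bnd k' b') h').2] ->
  [&& a != a', ~~ layout_adj os a a' & ~~ layout_adj os a' a].
Proof.
move=> km k'm neq ha ha'.
case: (ltngtP (bnd k b) (bnd k' b')) => BB.
- by apply: cross_pair_sep (bnd_far b km) os0 _ ha ha'; rewrite bnd_sep ?orbT.
- suff /and3P [? ? ?] : [&& a' != a, ~~ layout_adj os a' a & ~~ layout_adj os a a'].
    by rewrite eq_sym; apply/and3P.
  by apply: cross_pair_sep (bnd_far b' k'm) os0 _ ha' ha; rewrite bnd_sep ?orbT.
- case: (eqVneq (k, b) (k', b')) => [[kE bE] | kb]; last first.
    by move: (bnd_inj km k'm kb); rewrite BB eqxx.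
  subst k' b'; apply: cross_pair_sep (bnd_far b km) os0 _ ha ha'.
  by rewrite eqxx /=; apply/orP; left; apply: contra neq => /eqP ->.
Qed.

End PositionLabels.

Lemma adjacent_labelsC a b i : adjacent_labels a b i = adjacent_labels b a i.
Proof. by rewrite /adjacent_labels orbC. Qed.

Lemma adjacent_labels_neq a b i : adjacent_labels a b i -> a != b.
Proof. by case/orP => /andP [/eqP -> /eqP ->]; lia. Qed.

Lemma adjacent_labels_inj a b i j : adjacent_labels a b i -> adjacent_labels a b j -> i = j.
Proof. by rewrite /adjacent_labels; lia. Qed.

Section GraphLabelling.

Variables (T : finType) (e : rel T) (x0 : T) (s : seq T) (os : seq nat).
Variables (m : nat) (u d : nat -> nat) (t : nat) (f : T -> 'I_t).
Hypotheses (Hsym : symmetric e) (Hirr : irreflexive e) (s_uniq : uniq s) (s_all : forall x, x \in s)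
  (s_adj : forall p q, p < q -> q < size s -> e (nth x0 s p) (nth x0 s q) = layout_adj os p q)
  (Hnest : nested_intervals m (size s) u d)
  (Hfar : forall k, k < m -> far os (u k) && far os (d k))
  (os0 : 0 \in os) (osn : size s \in os)
  (Hf : forall x, val (f x) = label m u d (index x s)).

Local Notation bnd k b := (if b then u k else d k).
Local Notation pair_set P := [set nth x0 s P.1; nth x0 s P.2].
Local Notation cross_set k b h := (pair_set (cross_pair (bnd k b) h)).

Lemma index_nth_s p : p < size s -> index (nth x0 s p) s = p.
Proof. by move=> ps; rewrite index_uniq. Qed.

Lemma edge_index x y : e x y ->
  layout_adj os (index x s) (index y s) || layout_adj os (index y s) (index x s).
Proof.
have idx_lt z : index z s < size s by rewrite index_mem.
have nthE z : nth x0 s (index z s) = z by rewrite nth_index.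
case: (ltngtP (index x s) (index y s)) => [xy | yx | xy].
- by move=> exy; apply/orP; left; rewrite -s_adj ?idx_lt // !nthE.
- by move=> exy; apply/orP; right; rewrite -s_adj ?idx_lt // !nthE Hsym.
- by move: (congr1 (nth x0 s) xy); rewrite !nthE => ->; rewrite Hirr.
Qed.

Lemma layout_edge p q : layout_adj os p q -> q < size s -> e (nth x0 s p) (nth x0 s q).
Proof. by move=> pq qs; rewrite s_adj //; case/andP: (layout_adj_lt pq). Qed.

Lemma label_edge x y : e x y -> f x <= f y + 1 /\ f y <= f x + 1.
Proof.
rewrite !Hf => /edge_index /orP [] /layout_adj_lt /(label_lipschitz Hnest) //.
by case; split.
Qed.

Lemma cross_pair_mem_lt k b h p : k < m -> p \in [:: (cross_pair (bnd k b) h).1; (cross_pair (bnd k b) h).2] ->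
  p < size s.
Proof.
move=> km; have [_ Bn] := bnd_range Hnest Hfar os0 osn b km.
by rewrite !inE /cross_pair; case: h => /= /orP [] /eqP ->; lia.
Qed.

Lemma edge_cross x y : e x y -> f x != f y ->
  exists k b h, [/\ k < m, [set x; y] = cross_set k b h & adjacent_labels (f x) (f y) k].
Proof.
move=> exy; rewrite -(inj_eq val_inj) !Hf => lab_neq.
have nthE z : nth x0 s (index z s) = z by rewrite nth_index.
case/orP: (edge_index exy) => [xy | yx].
- have [k [b [h [km P adj]]]] := label_cross Hnest Hfar xy lab_neq.
  by exists k, b, h; rewrite -P /= !nthE.
- rewrite eq_sym in lab_neq; have [k [b [h [km P adj]]]] := label_cross Hnest Hfar yx lab_neq.
  by exists k, b, h; rewrite -P /= !nthE setUC adjacent_labelsC.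
Qed.

Lemma cross_set_sep k b h k' b' h' a a' : k < m -> k' < m -> (k, b, h) != (k', b', h') ->
  a \in cross_set k b h -> a' \in cross_set k' b' h' -> a != a' /\ ~~ e a a'.
Proof.
move=> km k'm neq.
have inP P z : z \in pair_set P -> exists2 p, p \in [:: P.1; P.2] & z = nth x0 s p.
  by rewrite !inE => /orP [] /eqP ->; [exists P.1 | exists P.2]; rewrite ?inE ?eqxx ?orbT.
case/inP => p hp ->; case/inP => p' hp' ->.
have /and3P [pp' np'p npp'] := cross_pairs_sep Hnest Hfar os0 osn km k'm neq hp hp'.
have ps := cross_pair_mem_lt km hp; have p's := cross_pair_mem_lt k'm hp'.
split; first by rewrite nth_uniq.
by apply/negP => /edge_index; rewrite !index_nth_s // (negbTE np'p) (negbTE npp').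
Qed.

Lemma induced_matching_cross_edges : induced_matching e (cross_edges e f).
Proof.
split.
  apply/subsetP => A; rewrite !inE => /existsP [x /existsP [y /and3P [AE exy _]]].
  by apply/existsP; exists x; apply/existsP; exists y; rewrite AE exy.
move=> A A'; rewrite !inE => /existsP [x /existsP [y /and3P [/eqP -> exy fxy]]].
move=> /existsP [x' /existsP [y' /and3P [/eqP -> exy' fxy']]].
have [k [b [h [km -> _]]]] := edge_cross exy fxy.
have [k' [b' [h' [k'm -> _]]]] := edge_cross exy' fxy'.
case: (eqVneq (k, b, h) (k', b', h')) => [[<- <- <-] | neq]; first by rewrite eqxx.
by move=> _ a a'; apply: cross_set_sep.
Qed.

Lemma edges_between_eq i : i < m ->
  edges_between e f i = [set cross_set i bh.1 bh.2 | bh : bool * bool].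
Proof.
move=> im; apply/setP => A; rewrite inE; apply/idP/imsetP.
- case/existsP => x /existsP [y /and3P [/eqP -> exy adj]].
  have fxy : f x != f y by rewrite -(inj_eq val_inj); apply: adjacent_labels_neq adj.
  have [k [b [h [km -> adjk]]]] := edge_cross exy fxy.
  by exists (b, h); rewrite // (adjacent_labels_inj adj adjk).
- case=> [[b h] _ ->]; have /andP [adj lab] := cross_pair_labels Hnest Hfar os0 osn b h im.
  have p_lt q := @cross_pair_mem_lt i b h q im.
  apply/existsP; exists (nth x0 s (cross_pair (bnd i b) h).1).
  apply/existsP; exists (nth x0 s (cross_pair (bnd i b) h).2).
  rewrite eqxx layout_edge ?p_lt ?inE ?eqxx ?orbT //= !Hf !index_nth_s ?p_lt ?inE ?eqxx ?orbT //.
Qed.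

Lemma card_edges_between i : i < m -> #|edges_between e f i| = 4.
Proof.
move=> im; rewrite edges_between_eq // card_imset ?card_prod ?card_bool //.
move=> [b h] [b' h'] /= E; apply/eqP/contraT => neq.
have neq' : (i, b, h) != (i, b', h') by apply: contra neq => /eqP [-> ->].
have a_in : nth x0 s (cross_pair (bnd i b) h).1 \in cross_set i b h by rewrite !inE eqxx.
have a_in' : nth x0 s (cross_pair (bnd i b) h).1 \in cross_set i b' h' by rewrite -E.
by have [] := cross_set_sep im im neq' a_in a_in'; rewrite eqxx.
Qed.

End GraphLabelling.

Lemma exists_zigzag_layout (T : finType) (e : rel T) k (x0 : T) :
  symmetric e -> irreflexive e -> two_regular e -> cycles_at_least k e -> 5 <= k ->
  exists s os, [/\ uniq s, forall x, x \in s,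
    forall p q, p < q -> q < size s -> e (nth x0 s p) (nth x0 s q) = layout_adj os p q,
    gapped k os & (0 \in os) && (size s \in os)].
Proof.
move=> Hsym Hirr Hreg Hgirth k5.
have [cs [cu cov ccs]] := exists_cycle_partition Hsym Hirr Hreg.
have csk : all (fun c => k <= size c) cs.
  by apply/allP => c /(allP ccs) /and3P [c_u c_c c3]; apply: Hgirth.
have cs5 : all (fun c => 5 <= size c) cs.
  by apply: sub_all csk => c /= /(leq_trans k5).
have csu : all uniq cs by apply: sub_all ccs => c /and3P [].
have perm := perm_zigzag_flatten x0 csu.
exists (zigzag_flatten x0 cs), (offsets cs); split.
- by rewrite (perm_uniq perm).
- by move=> x; rewrite (perm_mem perm).
- by move=> p q pq; rewrite size_zigzag_flatten; apply: zigzag_flatten_adj.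
- exact: offsets_gapped.
- by rewrite mem0_offsets size_zigzag_flatten size_mem_offsets.
Qed.

Lemma gapped_le k k' os : k' <= k -> gapped k os -> gapped k' os.
Proof. by move=> kk G o1 o2 o1in o2in /(G _ _ o1in o2in); lia. Qed.

Lemma card_set_count (T : finType) (s : seq T) (P : pred T) :
  uniq s -> (forall x, x \in s) -> #|[set x | P x]| = count P s.
Proof.
move=> s_uniq s_all; rewrite -size_filter -(card_uniqP (filter_uniq P s_uniq)).
by apply: eq_card => x; rewrite inE mem_filter s_all andbT.
Qed.

Unset Implicit Arguments. Set Strict Implicit.

Theorem lemma4p10 (n t : nat) (T : finType) (e : rel T)
  (HT : #|T| = n) (Hsimple : simple_graph e) (Hreg : two_regular e)
  (Hgirth : cycles_at_least 30 e)
  (ns : 'I_t -> nat) (Hsum : \sum_(i < t) ns i = n)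
  (Hns : forall i : 'I_t, 50 <= ns i) :
  exists f : T -> 'I_t,
    [/\ (forall i : 'I_t, #|[set x | f x == i]| = ns i),
        (forall x y : T, e x y -> f x <= f y + 1 /\ f y <= f x + 1),
        induced_matching e (cross_edges e f)
      & (forall i : nat, i.+1 < t -> #|edges_between e f i| = 4)].
Proof.
have [Hsym Hirr] := Hsimple.
case: (posnP t) => [t0 | tpos].
  subst t; have noT : T -> False.
    by move=> x; have := max_card (pred1 x); rewrite HT -Hsum big_ord0 card1.
  exists (fun x => match noT x with end); split=> [[] // | x | | //].
    by case: (noT x).
  split; first by apply/subsetP => A; rewrite inE => /existsP [x]; case: (noT x).
  by move=> A B; rewrite inE => /existsP [x]; case: (noT x).
have /card_gt0P [x0 _] : 0 < #|T|.
  rewrite HT -Hsum (bigD1 (Ordinal tpos)) //=.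
  by have := Hns (Ordinal tpos); lia.
have [s [os [s_uniq s_all s_adj Hgap /andP [os0 osn]]]] :=
  exists_zigzag_layout x0 Hsym Hirr Hreg Hgirth (isT : 5 <= 30).
have sizeE : size s = n.
  by rewrite -HT -(card_uniqP s_uniq); apply: eq_card => x; rewrite s_all.
pose ns' j := if insub j is Some i then ns i else 0.
have ns'E (i : 'I_t) : ns' i = ns i by rewrite /ns' valK.
have Hns' j : j <= t.-1 -> 50 <= ns' j.
  rewrite -ltnS prednK // => jt; rewrite /ns'; case: insubP => [i _ _ | ]; first exact: Hns.
  by rewrite jt.
have sum_ns' : \sum_(j < t.-1.+1) ns' j = n.
  by rewrite prednK // -Hsum; apply: eq_bigr => i _; rewrite ns'E.
have N0 : \sum_(j < 1) ns' j = ns' 0 by rewrite big_ord1.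
have NS k : \sum_(j < k.+2) ns' j = \sum_(j < k.+1) ns' j + ns' k.+1 by rewrite big_ord_recr.
have [u [d [Hnest Hfar Hcount]]] :=
  exists_boundaries (gapped_le (isT : 15 <= 30) Hgap) Hns' N0 NS sum_ns'.
rewrite -sizeE in Hnest.
have lab_lt p : label t.-1 u d p < t by rewrite (leq_ltn_trans (label_le _ _ _ _)) // prednK.
pose f x := Ordinal (lab_lt (index x s)).
have Hf x : val (f x) = label t.-1 u d (index x s) by [].
exists f; split.
- move=> i; rewrite (card_set_count _ s_uniq s_all) -[s in count _ s](mkseq_nth x0) /mkseq count_map.
  rewrite -ns'E -Hcount; last by rewrite -ltnS prednK.
  rewrite sizeE; apply: eq_in_count => p.
  by rewrite mem_iota add0n -sizeE => ps /=; rewrite -(inj_eq val_inj) /= index_uniq.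
- exact: label_edge Hsym Hirr s_all s_adj Hnest Hf.
- exact: induced_matching_cross_edges Hsym Hirr s_uniq s_all s_adj Hnest Hfar os0 osn Hf.
- move=> i it; apply: (card_edges_between Hsym Hirr s_uniq s_all s_adj Hnest Hfar os0 osn Hf).
  by rewrite -ltnS prednK.
Qed.
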